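(* Let $h\in\mathcal H$, $k_0=k_0(h)$, $h_0=h(k_0)$, and let $d>h_0$ be an integer. If $h(k)\ge (d-k+1)\,h(k-1)$ for all integers $k$ with $k_0+1\le k\le d$, then $\operatorname{hdepth}(h)\ge d$.
   Context: $\mathcal H$ denotes the set of nonzero functions $h:\mathbb Z\to\mathbb Z_{\ge 0}$ such that $h(j)=0$ for all sufficiently negative $j$. For $h\in\mathcal H$ and integers $k\le d$, set $\beta_k^d(h)=\sum_{j\le k}(-1)^{k-j}\binom{d-j}{k-j}h(j)$, and $\operatorname{hdepth}(h)=\max\{d\in\mathbb Z:\ \beta_k^d(h)\ge 0\text{ for all integers }k\le d\}$. Also $k_0(h)=\min\{j: h(j)>0\}$. *)

From mathcomp Require Import all_boot all_order all_algebra.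
From Stdlib Require Import ClassicalEpsilon.
Set Implicit Arguments. Unset Strict Implicit. Unset Printing Implicit Defensive.
Import Order.TTheory GRing.Theory Num.Theory.
Local Open Scope ring_scope.

Definition in_H (h : int -> nat) : Prop :=
  (exists j : int, h j != 0%N) /\ (exists N : int, forall j : int, j < N -> h j = 0%N).

Definition is_k0 (h : int -> nat) (k0 : int) : Prop :=
  (0 < h k0)%N /\ forall j : int, j < k0 -> h j = 0%N.

Definition lowb (h : int -> nat) : int :=
  epsilon (inhabits 0) (fun N : int => forall j : int, j < N -> h j = 0%N).

(* beta_k^d(h) = sum_{j <= k} (-1)^(k-j) C(d-j, k-j) h(j).
   Terms with j < lowb h vanish, so the sum runs over j = k - i, i = 0..k - lowb h. *)
Definition beta (h : int -> nat) (k d : int) : int :=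
  \sum_(i < (absz (k - lowb h)).+1 | lowb h <= k)
     ((-1) ^+ i * ('C(absz (d - (k - i%:Z))%R, i))%:Z * (h (k - i%:Z))%:Z).

Definition hdepth_ok (h : int -> nat) (d : int) : Prop :=
  forall k : int, k <= d -> 0 <= beta h k d.

Definition is_hdepth (h : int -> nat) (m : int) : Prop :=
  hdepth_ok h m /\ forall d : int, hdepth_ok h d -> d <= m.

From mathcomp Require Import all_boot all_order all_algebra.
From mathcomp Require Import zify.
From Stdlib Require Import ClassicalEpsilon Classical.
Import Order.TTheory GRing.Theory Num.Theory.
Local Open Scope ring_scope.

(* The growth hypothesis makes the summands [C(d-j, k-j) h(j)] of [beta_k^d(h)]
   nonincreasing as [j] decreases, so each [beta_k^d(h)] is an alternating sum of a
   nonincreasing nonnegative sequence, hence nonnegative.  Conversely [beta_(k0+1)^d(h)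
   = h(k0+1) - (d-k0) h(k0)] bounds every admissible [d] by [k0 + h(k0+1)], so the
   maximum defining [hdepth(h)] exists and is at least [d]. *)

Lemma alternating_sum_bounds (R : numDomainType) (N : nat) (b : nat -> R) :
  (forall i, 0 <= b i) -> (forall i, b i.+1 <= b i) ->
  0 <= \sum_(i < N.+1) (-1) ^+ i * b i <= b 0%N.
Proof.
elim: N b => [|N IH] b b_ge0 b_noninc.
  by rewrite big_ord_recl big_ord0 expr0 mul1r addr0 lexx b_ge0.
rewrite big_ord_recl expr0 mul1r.
have /andP[tail_ge0 tail_le] :=
  IH (fun i => b i.+1) (fun i => b_ge0 i.+1) (fun i => b_noninc i.+1).
have -> : \sum_(i < N.+1) (-1) ^+ (bump 0 i) * b (bump 0 i)
          = - \sum_(i < N.+1) (-1) ^+ i * b i.+1.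
  by rewrite -sumrN; apply: eq_bigr => i _; rewrite exprS mulN1r mulNr.
apply/andP; split; first by rewrite subr_ge0 (le_trans tail_le).
by rewrite gerBl.
Qed.

Lemma binS_mul_le (n i a b : nat) :
  (n.+1 * a <= b)%N -> ('C(n.+1, i.+1) * a <= 'C(n, i) * b)%N.
Proof.
move=> growth.
apply: (@leq_trans ('C(n.+1, i.+1) * i.+1 * a)).
  by rewrite leq_mul2r leq_pmulr // orbT.
rewrite [(_ * i.+1)%N]mulnC -(mul_bin_diag n.+1) /= mulnAC mulnC.
by rewrite leq_mul2l growth orbT.
Qed.

Lemma lowbP {h : int -> nat} : in_H h -> forall j : int, j < lowb h -> h j = 0%N.
Proof. by move=> [_ vanish]; apply: (epsilon_spec (inhabits 0) _ vanish). Qed.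

Section Growth.

Context {h : int -> nat} {k0 d : int}.
Hypothesis k0P : is_k0 h k0.
Hypothesis growth :
  forall k : int, k0 + 1 <= k <= d -> (d - k + 1) * (h (k - 1))%:Z <= (h k)%:Z.

Lemma beta_term_noninc (k : int) (i : nat) : k <= d ->
  'C(absz (d - (k - i.+1%:Z))%R, i.+1) * h (k - i.+1%:Z)
  <= 'C(absz (d - (k - i%:Z))%R, i) * h (k - i%:Z) :> int.
Proof.
move=> le_kd; case: k0P => _ h_below.
set j := k - i%:Z.
have -> : k - i.+1%:Z = j - 1 by rewrite /j; lia.
have [lt_jk0 | le_k0j] := ltP (j - 1) k0; first by rewrite h_below // mulr0.
have -> : absz (d - (j - 1))%R = (absz (d - j)%R).+1 by lia.
rewrite lez_nat; apply: binS_mul_le.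
have := growth j (ltac:(apply/andP; split; rewrite /j; lia)).
have -> : d - j + 1 = (absz (d - j)%R).+1%:Z by rewrite /j; lia.
by rewrite -PoszM lez_nat.
Qed.

Lemma hdepth_ok_of_growth : hdepth_ok h d.
Proof.
move=> k le_kd; rewrite /beta big_mkcond /=.
case: (lowb h <= k); last by rewrite big1.
pose b i : int := 'C(absz (d - (k - i%:Z))%R, i) * h (k - i%:Z).
rewrite (eq_bigr (fun i : 'I__ => (-1) ^+ i * b i)); last first.
  by move=> i _; rewrite /b -mulrA PoszM.
have b_ge0 i : 0 <= b i by [].
have b_noninc i : b i.+1 <= b i := beta_term_noninc k i le_kd.
by have /andP[] := alternating_sum_bounds _ (absz (k - lowb h)%R) b b_ge0 b_noninc.
Qed.

End Growth.

Lemma hdepth_ok_le {h : int -> nat} {k0 d : int} : in_H h -> is_k0 h k0 ->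
  hdepth_ok h d -> d <= k0 + (h (k0 + 1))%:Z.
Proof.
move=> hH [h_k0 h_below] ok.
have [|le_k0d] := ltP d (k0 + 1); first by lia.
have lowb_le : lowb h <= k0.
  by rewrite leNgt; apply/negP => /(lowbP hH) h0; rewrite h0 in h_k0.
have := ok _ le_k0d; rewrite /beta.
have -> : lowb h <= k0 + 1 by lia.
have -> : absz (k0 + 1 - lowb h)%R = (absz (k0 - lowb h)%R).+1 by lia.
rewrite !big_ord_recl big1; last by move=> i _; rewrite h_below ?mulr0 //= /bump /=; lia.
rewrite /= /bump /= !expr0 !expr1 !mul1r bin0 bin1 addr0 subr0.
have -> : k0 + 1 - 1 = k0 by lia.
have -> : (absz (d - k0)%R)%:Z = d - k0 by lia.
nia.
Qed.

Lemma int_bounded_has_max {P : int -> Prop} {B d : int} :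
  P d -> (forall x, P x -> x <= B) ->
  exists m, [/\ P m, forall x, P x -> x <= m & d <= m].
Proof.
move=> Pd P_le.
have [n le_Bd_n] : exists n : nat, B - d <= n%:Z by exists (absz (B - d)%R); lia.
elim: n d Pd le_Bd_n => [|n IH] d0 Pd0 le_Bd0_n.
  by exists d0; split=> // x /P_le; lia.
have [d0_max | ] := classic (forall x, P x -> x <= d0); first by exists d0.
move=> /not_all_ex_not[d1 not_bounded_d1].
have [Pd1 not_le_d1d0] := imply_to_and _ _ not_bounded_d1.
have lt_d0d1 : d0 < d1 by rewrite ltNge; apply/negP.
have [m [Pm m_max le_d1m]] := IH d1 Pd1 (ltac:(lia)).
by exists m; split=> //; lia.
Qed.

Theorem proposition1p8 (h : int -> nat) (k0 d : int) :
  in_H h -> is_k0 h k0 ->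
  (h k0)%:Z < d ->
  (forall k : int, k0 + 1 <= k <= d -> ((d - k + 1) * (h (k - 1))%:Z <= (h k)%:Z)) ->
  exists m : int, is_hdepth h m /\ d <= m.
Proof.
move=> hH k0P _ growth.
have [m [ok_m m_max le_dm]] :=
  int_bounded_has_max (hdepth_ok_of_growth k0P growth) (fun x => hdepth_ok_le hH k0P).
by exists m; split; first split.
Qed.
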